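(* (1) $\mathsf{WFT}_{\mathbb S}\le_W\mathsf T\mathsf C_{\mathbb N^\mathbb N}$ and $\mathsf{WFT}_{\mathbb S}\not\le_W\overline{\mathsf C_{\mathbb N^\mathbb N}}$. (2) $\mathsf{WFT}\le_W\mathsf C_{\mathbb N^\mathbb N}*\mathsf T\mathsf C_{\mathbb N^\mathbb N}$ and $\mathsf{WFT}\not\le_W\mathsf T\mathsf C_{\mathbb N^\mathbb N}$.
   Context: A problem $f:\subseteq X\rightrightarrows Y$ between represented spaces is a partial multi-valued map; $F\vdash f$ means $\delta_YF(p)\in f(\delta_X(p))$ whenever $\delta_X(p)\in\mathrm{dom}(f)$; $f\le_W g$ iff there are computable partial $H,K$ with $H\langle\mathrm{id},GK\rangle\vdash f$ for all $G\vdash g$. The compositional product $f*g$ is a problem representing the $\le_W$-maximum of $\{f_0\circ g_0:f_0\le_Wf,\ g_0\le_Wg\}$ (which exists). $\mathcal A_-(\mathbb N^\mathbb N)$ is the space of closed subsets of Baire space represented by $p\mapsto\mathbb N^\mathbb N\setminus\bigcup_nB_{p(n)}$ for a standard enumeration $(B_n)$ of basic open sets (including empty ones). $\mathsf C_{\mathbb N^\mathbb N}:\subseteq\mathcal A_-(\mathbb N^\mathbb N)\rightrightarrows\mathbb N^\mathbb N$, $A\mapsto A$, on nonempty $A$. $\mathsf{WFT}:\mathcal A_-(\mathbb N^\mathbb N)\to\{0,1\}$ gives $1$ iff $A=\emptyset$ ($\{0,1\}$ represented by $p\mapsto p(0)$), and $\mathsf{WFT}_{\mathbb S}$ is the same map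 with target Sierpiński space $\mathbb S=\{0,1\}$ represented by $\delta_{\mathbb S}(p)=0\iff p=000\dots$. For $p\in\mathbb{N}^\mathbb{N}$, $p-1$ is the concatenation of $p(0)-1,p(1)-1,\dots$ with $0-1$ the empty word; the completion of $(X,\delta_X)$ is $\overline X=X\cup\{\bot\}$ with $\delta_{\overline X}(p)=\delta_X(p-1)$ if $p-1$ is an infinite sequence in $\mathrm{dom}(\delta_X)$, $\bot$ otherwise. For $f:\subseteq X\rightrightarrows Y$: $\overline f:\overline X\rightrightarrows\overline Y$ equals $f$ on $\mathrm{dom}(f)$ and $\overline Y$ elsewhere; $\mathsf Tf:X\rightrightarrows Y$ equals $f$ on $\mathrm{dom}(f)$ and $Y$ elsewhere. *)

From Stdlib Require Import Arith List Cantor.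
Import ListNotations.

Definition Baire := nat -> nat.

(** A partial function F :⊆ N^N -> N^N is computable iff there is a program e
    with  F(p)(n) = Φ_e^p(n)  (an oracle Turing functional). *)
Inductive prog : Type :=
| PZero : prog
| PSucc : prog
| PProj : nat -> prog
| POracle : prog
| PComp : prog -> list prog -> prog
| PPrim : prog -> prog -> prog
| PMu : prog -> prog.

Inductive eval (p : Baire) : prog -> list nat -> nat -> Prop :=
| ev_zero : forall v, eval p PZero v 0
| ev_succ : forall x v, eval p PSucc (x :: v) (S x)
| ev_proj : forall i v, i < length v -> eval p (PProj i) v (nth i v 0)
| ev_oracle : forall x v, eval p POracle (x :: v) (p x)
| ev_comp : forall f gs v ws y,
    evals p gs v ws -> eval p f ws y -> eval p (PComp f gs) v y
| ev_prim0 : forall f g v y, eval p f v y -> eval p (PPrim f g) (0 :: v) y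
| ev_primS : forall f g n v y z,
    eval p (PPrim f g) (n :: v) y -> eval p g (n :: y :: v) z ->
    eval p (PPrim f g) (S n :: v) z
| ev_mu : forall f v n,
    eval p f (n :: v) 0 ->
    (forall m, m < n -> exists k, eval p f (m :: v) (S k)) ->
    eval p (PMu f) v n
with evals (p : Baire) : list prog -> list nat -> list nat -> Prop :=
| evs_nil : forall v, evals p [] v []
| evs_cons : forall g gs v y ys,
    eval p g v y -> evals p gs v ys -> evals p (g :: gs) v (y :: ys).

Definition computes (e : prog) (p q : Baire) : Prop :=
  forall n, eval p e [n] (q n).

Definition bpair (p q : Baire) : Baire :=
  fun n => if Nat.even n then p (Nat.div2 n) else q (Nat.div2 n).

Record RepSpace : Type := {
  rs_type :> Type;
  rs_delta : Baire -> rs_type -> Prop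
}.

Definition problem (X Y : RepSpace) := X -> Y -> Prop.
Definition pdom {X Y : RepSpace} (f : problem X Y) (x : X) : Prop := exists y, f x y.

Definition realizes {X Y : RepSpace} (F : Baire -> option Baire) (f : problem X Y) : Prop :=
  forall p x, rs_delta X p x -> pdom f x ->
    exists q, F p = Some q /\ exists y, rs_delta Y q y /\ f x y.

Definition Wred {X Y U V : RepSpace} (f : problem X Y) (g : problem U V) : Prop :=
  exists eH eK : prog,
    forall G : Baire -> option Baire, realizes G g ->
      forall p x, rs_delta X p x -> pdom f x ->
        exists k q r,
          computes eK p k /\ G k = Some q /\ computes eH (bpair p q) r /\
          exists y, rs_delta Y r y /\ f x y.

Definition pcomp {X Y Z : RepSpace} (f : problem Y Z) (g : problem X Y) : problem X Z :=
  fun x z => pdom g x /\ (forall y, g x y -> pdom f y) /\ exists y, g x y /\ f y z.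

(** f ≤_W g * h, where g * h is the ≤_W-maximum of
    {g0 ∘ h0 : g0 ≤_W g, h0 ≤_W h}; since the maximum is an element of that
    set, f ≤_W g*h iff f ≤_W g0∘h0 for some such g0, h0. *)
Definition Wred_cprod {X Y U1 V1 U2 V2 : RepSpace}
    (f : problem X Y) (g : problem U1 V1) (h : problem U2 V2) : Prop :=
  exists (A B Cs : RepSpace) (g0 : problem B Cs) (h0 : problem A B),
    Wred g0 g /\ Wred h0 h /\ Wred f (pcomp g0 h0).

Definition BaireS : RepSpace :=
  {| rs_type := Baire; rs_delta := fun p x => x = p |}.

(** Standard enumeration of finite words: decode is a surjection nat -> list nat *)
Fixpoint dec (fuel n : nat) : list nat :=
  match fuel with
  | 0 => []
  | S f => match n with
           | 0 => []
           | S m => let (a, b) := Cantor.of_nat m in a :: dec f b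
           end
  end.
Definition decode (n : nat) : list nat := dec (S n) n.

Fixpoint prefix_of (w : list nat) (x : Baire) (i : nat) : Prop :=
  match w with
  | [] => True
  | a :: w' => x i = a /\ prefix_of w' x (S i)
  end.

Definition basic (n : nat) (x : Baire) : Prop :=
  match n with
  | 0 => False
  | S m => prefix_of (decode m) x 0
  end.

(** A_-(N^N): p names N^N \ ⋃_n B_{p(n)}; closed sets are predicates *)
Definition ClosedS : RepSpace :=
  {| rs_type := Baire -> Prop;
     rs_delta := fun p A => A = (fun x => forall n, ~ basic (p n) x) |}.

Definition TwoS : RepSpace :=
  {| rs_type := bool;
     rs_delta := fun p b => p 0 = (if b then 1 else 0) |}.

Definition SierpS : RepSpace :=
  {| rs_type := bool;
     rs_delta := fun p b => if b then exists n, p n <> 0 else forall n, p n = 0 |}.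

(** p - 1: q is the infinite sequence p(n0)-1, p(n1)-1, ... where
    n0 < n1 < ... enumerates the n with p(n) <> 0 (the entries with p(n) = 0
    contribute the empty word).  [minus1 p q] holds iff p-1 is infinite and
    equals q. *)
Definition minus1 (p q : Baire) : Prop :=
  exists s : nat -> nat,
    (forall k, s k < s (S k)) /\
    (forall n, p n <> 0 <-> exists k, s k = n) /\
    (forall k, q k = p (s k) - 1).

(** completion: carrier option X, None = ⊥ *)
Definition Compl (X : RepSpace) : RepSpace :=
  {| rs_type := option X;
     rs_delta := fun p ox =>
       match ox with
       | Some x => exists q, minus1 p q /\ rs_delta X q x
       | None => ~ (exists q x, minus1 p q /\ rs_delta X q x)
       end |}.

Definition pbar {X Y : RepSpace} (f : problem X Y) : problem (Compl X) (Compl Y) :=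
  fun ox oy =>
    match ox with
    | Some x => match oy with Some y => (f x y \/ ~ pdom f x) | None => ~ pdom f x end
    | None => True
    end.

Definition ptot {X Y : RepSpace} (f : problem X Y) : problem X Y :=
  fun x y => f x y \/ ~ pdom f x.

Definition C_Baire : problem ClosedS BaireS := fun A x => A x.

Definition WFT : problem ClosedS TwoS :=
  fun A b => b = true <-> (forall x, ~ A x).

Definition WFT_S : problem ClosedS SierpS :=
  fun A b => b = true <-> (forall x, ~ A x).

(* [WFT_S <= T C]: give the name [p] of [A] to [T C]; if [A] is empty the answer [q]
   lies outside [A], which is semi-decided by searching for a basic set [B_(p i)]
   containing [q].  For [WFT <= C * T C] compose with the identity [S -> {0,1}], which
   reduces to [C]: a Sierpinski name [o] is turned into a closed set whose points
   reveal in their first entry whether [o = 000...].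

   For the negative halves, a reduction fixes the programs [H] and [K] but must work
   for every realizer, so given [H, K] we choose the realizer and the input
   adversarially.  The input is a closed set [A] whose name [p] is defined in terms
   of the behaviour of [H] and [K] on [p] itself; this is possible because whether a
   cylinder is removed only depends on finitely many entries of [p]
   ([closed_fixpoint]).  Against [T C], [A] is [K(p)] minus the answers that [H]
   declares nonempty, and the realizer returns a point of [A] if there is one.
   Against the completion, the points of [A] encode an answer of [bar C] to [K(p)]
   together with a finite prefix of it that already makes [H] declare emptiness, and
   the realizer returns such an answer if there is one; either way [H] errs. *)

From Stdlib Require Import Arith List Lia Cantor Classical ClassicalEpsilon.
Import ListNotations.

(** * Oracle computations are deterministic and continuous *)

Section EvalInd.
Variable p : Baire.
Variable P : prog -> list nat -> nat -> Prop.
Variable Q : list prog -> list nat -> list nat -> Prop.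
Hypothesis Hzero : forall v, P PZero v 0.
Hypothesis Hsucc : forall x v, P PSucc (x :: v) (S x).
Hypothesis Hproj : forall i v, i < length v -> P (PProj i) v (nth i v 0).
Hypothesis Horacle : forall x v, P POracle (x :: v) (p x).
Hypothesis Hcomp : forall f gs v ws y,
  evals p gs v ws -> Q gs v ws -> eval p f ws y -> P f ws y -> P (PComp f gs) v y.
Hypothesis Hprim0 : forall f g v y, eval p f v y -> P f v y -> P (PPrim f g) (0 :: v) y.
Hypothesis HprimS : forall f g n v y z,
  eval p (PPrim f g) (n :: v) y -> P (PPrim f g) (n :: v) y ->
  eval p g (n :: y :: v) z -> P g (n :: y :: v) z -> P (PPrim f g) (S n :: v) z.
Hypothesis Hmu : forall f v n,
  eval p f (n :: v) 0 -> P f (n :: v) 0 ->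
  (forall m, m < n -> exists k, eval p f (m :: v) (S k) /\ P f (m :: v) (S k)) ->
  P (PMu f) v n.
Hypothesis Hnil : forall v, Q [] v [].
Hypothesis Hcons : forall g gs v y ys,
  eval p g v y -> P g v y -> evals p gs v ys -> Q gs v ys -> Q (g :: gs) v (y :: ys).

(* The generated [eval_ind] has no induction hypothesis under the [exists] of [ev_mu]. *)
Fixpoint eval_ind_nested e v y (H : eval p e v y) {struct H} : P e v y
with evals_ind_nested gs v ws (H : evals p gs v ws) {struct H} : Q gs v ws.
Proof.
  - destruct H.
    + apply Hzero.
    + apply Hsucc.
    + now apply Hproj.
    + apply Horacle.
    + eapply Hcomp; eauto.
    + apply Hprim0; auto.
    + eapply HprimS; eauto.
    + apply Hmu; auto. intros m Hm. destruct (H0 m Hm) as [k Hk].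
      exists k. split; [exact Hk | exact (eval_ind_nested _ _ _ Hk)].
  - destruct H.
    + apply Hnil.
    + apply Hcons; auto.
Qed.
End EvalInd.

Lemma eval_det p e v y y' : eval p e v y -> eval p e v y' -> y = y'.
Proof.
  intros H; revert y'.
  induction H using eval_ind_nested with
    (Q := fun gs v ws => forall ws', evals p gs v ws' -> ws = ws');
    intros y' H'; inversion H'; subst; auto.
  - apply IHeval in H3; subst. auto.
  - match goal with Hx : eval _ (PPrim f g) (n :: v) _ |- _ => apply IHeval1 in Hx end.
    subst. auto.
  - destruct (lt_eq_lt_dec n y') as [[Hlt | Heq] | Hgt]; auto.
    + destruct (H3 n Hlt) as [k Hk]. apply IHeval in Hk. discriminate.
    + destruct (H0 y' Hgt) as [k [_ Hk]]. apply Hk in H2. discriminate.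
  - f_equal; auto.
Qed.

Lemma computes_eval_iff e p k n v : computes e p k -> (eval p e [n] v <-> k n = v).
Proof. intros Hk. split; [apply eval_det, Hk | intros <-; apply Hk]. Qed.

Definition agree (o o' : Baire) (b : nat) : Prop := forall i, i < b -> o i = o' i.

Lemma agree_le o o' b b' : b' <= b -> agree o o' b -> agree o o' b'.
Proof. intros Hb H i Hi. apply H. lia. Qed.

Lemma agree_sym o o' b : agree o o' b -> agree o' o b.
Proof. intros H i Hi. symmetry. auto. Qed.

Lemma agree_trans o1 o2 o3 b : agree o1 o2 b -> agree o2 o3 b -> agree o1 o3 b.
Proof. intros H1 H2 i Hi. rewrite H1; auto. Qed.

Lemma agree_refl o b : agree o o b.
Proof. intros i _. reflexivity. Qed.

Ltac weaken H := eapply agree_le; [|exact H]; lia.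

Lemma agree_uniform (P : nat -> Baire -> Prop) p n :
  (forall m, m < n -> exists b, forall p', agree p p' b -> P m p') ->
  exists b, forall m p', m < n -> agree p p' b -> P m p'.
Proof.
  induction n as [|n IH]; intros Hloc; [exists 0; intros; lia|].
  destruct IH as [b1 Hb1]; [intros m Hm; apply Hloc; lia|].
  destruct (Hloc n) as [b2 Hb2]; [lia|].
  exists (b1 + b2). intros m p' Hm Ha.
  destruct (Nat.eq_dec m n) as [-> | Hne].
  - apply Hb2. weaken Ha.
  - apply Hb1; [lia | weaken Ha].
Qed.

Lemma eval_continuous p e v y :
  eval p e v y -> exists b, forall p', agree p p' b -> eval p' e v y.
Proof.
  induction 1 using eval_ind_nested with
    (Q := fun gs v ws => exists b, forall p', agree p p' b -> evals p' gs v ws).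
  - exists 0. intros. constructor.
  - exists 0. intros. constructor.
  - exists 0. intros. now constructor.
  - exists (S x). intros p' Ha. rewrite (Ha x) by lia. constructor.
  - destruct IHeval as [b1 H1], IHeval0 as [b2 H2]. exists (b1 + b2). intros p' Ha.
    eapply ev_comp; [apply H1 | apply H2]; weaken Ha.
  - destruct IHeval as [b Hb]. exists b. intros. apply ev_prim0. auto.
  - destruct IHeval1 as [b1 H1], IHeval2 as [b2 H2]. exists (b1 + b2). intros p' Ha.
    eapply ev_primS; [apply H1 | apply H2]; weaken Ha.
  - destruct IHeval as [b0 Hb0].
    destruct (agree_uniform (fun m p' => exists k, eval p' f (m :: v) (S k)) p n)
      as [b1 Hb1].
    { intros m Hm. destruct (H0 m Hm) as [k [_ [b Hb]]]. eauto. }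
    exists (b0 + b1). intros p' Ha. constructor.
    + apply Hb0. weaken Ha.
    + intros m Hm. apply Hb1; auto. weaken Ha.
  - exists 0. intros. constructor.
  - destruct IHeval as [b1 H1], IHeval0 as [b2 H2]. exists (b1 + b2). intros p' Ha.
    constructor; [apply H1 | apply H2]; weaken Ha.
Qed.

Lemma of_nat_snd_le m : snd (of_nat m) <= m.
Proof.
  pose proof (cancel_to_of m) as H. destruct (of_nat m) as [x y]. simpl.
  pose proof (to_nat_non_decreasing x y). lia.
Qed.

Lemma dec_fuel f1 f2 n : n < f1 -> n < f2 -> dec f1 n = dec f2 n.
Proof.
  revert f2 n; induction f1 as [|f1 IH]; intros [|f2] [|n] H1 H2; try lia; try reflexivity.
  simpl. pose proof (of_nat_snd_le n). destruct (of_nat n) as [a b]. simpl in *.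
  f_equal. apply IH; lia.
Qed.

Lemma decode_S m : decode (S m) = fst (of_nat m) :: decode (snd (of_nat m)).
Proof.
  unfold decode. change (dec (S (S m)) (S m)) with (let (a, b) := of_nat m in a :: dec (S m) b).
  pose proof (of_nat_snd_le m). destruct (of_nat m) as [a b]. cbn [fst snd] in *.
  f_equal. apply dec_fuel; lia.
Qed.

Fixpoint code (w : list nat) : nat :=
  match w with [] => 0 | a :: w' => S (to_nat (a, code w')) end.

Lemma decode_code w : decode (code w) = w.
Proof.
  induction w as [|a w IH]; [reflexivity|].
  cbn [code]. rewrite decode_S, cancel_of_to. simpl. congruence.
Qed.

Lemma code_decode n : code (decode n) = n.
Proof.
  induction n as [[|n] IH] using lt_wf_ind; [reflexivity|].
  rewrite decode_S. cbn [code]. rewrite IH by (pose proof (of_nat_snd_le n); lia).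
  rewrite <- surjective_pairing. now rewrite cancel_to_of.
Qed.

Definition pref (x : Baire) (n : nat) : list nat := map x (seq 0 n).

Lemma pref_length x n : length (pref x n) = n.
Proof. unfold pref. now rewrite length_map, length_seq. Qed.

Lemma nth_pref x n j : j < n -> nth j (pref x n) 0 = x j.
Proof.
  intros Hj. unfold pref.
  rewrite (nth_indep _ 0 (x 0)) by now rewrite length_map, length_seq.
  now rewrite map_nth, seq_nth.
Qed.

Lemma prefix_of_iff w x i :
  prefix_of w x i <-> forall j, j < length w -> x (i + j) = nth j w 0.
Proof.
  revert i; induction w as [|a w IH]; intros i; simpl; split.
  - lia.
  - auto.
  - intros [H1 H2] [|j] Hj; [now rewrite Nat.add_0_r|].
    rewrite <- Nat.add_succ_comm. apply IH; auto; lia.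
  - intros H. split; [now rewrite <- (Nat.add_0_r i), H by lia|].
    apply IH. intros j Hj. rewrite Nat.add_succ_comm. apply (H (S j)). lia.
Qed.

Lemma prefix_of_shift w z i j : prefix_of w z (i + j) <-> prefix_of w (fun t => z (i + t)) j.
Proof.
  revert j; induction w as [|a w IH]; intros j; simpl; [tauto|].
  rewrite <- Nat.add_succ_r, IH. tauto.
Qed.

Lemma prefix_of_pref_iff w x : prefix_of w x 0 <-> w = pref x (length w).
Proof.
  rewrite prefix_of_iff. split.
  - intros H. apply nth_ext with (d := 0) (d' := 0); [now rewrite pref_length|].
    intros j Hj. rewrite nth_pref, <- H; auto.
  - intros E j Hj. rewrite E, nth_pref; auto.
Qed.

Lemma prefix_of_pref x b : prefix_of (pref x b) x 0.
Proof. apply prefix_of_pref_iff. now rewrite pref_length. Qed.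

Lemma agree_of_prefix_pref x y b : prefix_of (pref x b) y 0 -> agree x y b.
Proof.
  rewrite prefix_of_iff, pref_length. intros H i Hi.
  specialize (H i Hi). simpl in H. now rewrite H, nth_pref.
Qed.

Lemma basic_S_iff m x : basic (S m) x <-> exists len, m = code (pref x len).
Proof.
  simpl. rewrite prefix_of_pref_iff. split.
  - intros H. exists (length (decode m)). now rewrite <- H, code_decode.
  - intros [len ->]. now rewrite decode_code, pref_length.
Qed.

Definition ClosedOf (k : Baire) : Baire -> Prop := fun z => forall n, ~ basic (k n) z.

(** * Closed sets defined through their own names *)

Definition ext (l : list nat) : Baire := fun i => nth i l 0.

Section ClosedFixpoint.
Variable Psi : Baire -> nat -> list nat -> Prop.
Hypothesis Psi_local : forall o o' b w, agree o o' b -> Psi o b w -> Psi o' b w.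

(* Entry [m = to_nat (S t, _)] removes the cylinder of [decode t] as soon as [Psi]
   holds for [decode t] with some modulus [b <= m]; this only depends on the first
   [m] entries, which are already fixed. *)
Definition fp_entry (m : nat) (l : list nat) : nat :=
  match fst (of_nat m) with
  | 0 => 0
  | S t => if excluded_middle_informative (exists b, b <= m /\ Psi (ext l) b (decode t))
           then S t else 0
  end.

Fixpoint fp_prefix (m : nat) : list nat :=
  match m with 0 => [] | S m' => fp_prefix m' ++ [fp_entry m' (fp_prefix m')] end.

Definition fp : Baire := fun m => fp_entry m (fp_prefix m).

Lemma fp_prefix_length m : length (fp_prefix m) = m.
Proof. induction m; simpl; auto. rewrite length_app; simpl; lia. Qed.

Lemma agree_fp_prefix m : agree (ext (fp_prefix m)) fp m.
Proof.
  induction m as [|m IH]; intros i Hi; [lia|]. unfold ext; simpl.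
  destruct (Nat.eq_dec i m) as [-> | Hne].
  - rewrite app_nth2; rewrite fp_prefix_length; [|lia]. now rewrite Nat.sub_diag.
  - rewrite app_nth1 by (rewrite fp_prefix_length; lia). apply IH. lia.
Qed.

Lemma ClosedOf_fp z :
  ClosedOf fp z <-> ~ exists b w, Psi fp b w /\ prefix_of w z 0.
Proof.
  split.
  - intros H [b [w [HP Hw]]].
    set (m := to_nat (S (code w), b)).
    assert (Hbm : b <= m) by (pose proof (to_nat_non_decreasing (S (code w)) b); unfold m; lia).
    apply (H m). unfold fp, fp_entry, m at 1. rewrite cancel_of_to. simpl.
    destruct excluded_middle_informative as [_ | Hn].
    + simpl. now rewrite decode_code.
    + exfalso. apply Hn. exists b. split; [exact Hbm|].
      rewrite decode_code. apply (Psi_local fp); auto.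
      apply agree_sym. eapply agree_le; [exact Hbm | apply agree_fp_prefix].
  - intros H n Hb. unfold fp, fp_entry in Hb. destruct (fst (of_nat n)) as [|t]; [exact Hb|].
    destruct excluded_middle_informative as [[b [Hbn HP]] | _]; [|exact Hb].
    apply H. exists b, (decode t). split; [|exact Hb].
    apply (Psi_local (ext (fp_prefix n))); auto.
    eapply agree_le; [exact Hbn | apply agree_fp_prefix].
Qed.
End ClosedFixpoint.

Lemma closed_fixpoint (Psi : Baire -> nat -> list nat -> Prop) :
  (forall o o' b w, agree o o' b -> Psi o b w -> Psi o' b w) ->
  exists p, forall z, ClosedOf p z <-> ~ exists b w, Psi p b w /\ prefix_of w z 0.
Proof. intros H. exists (fp Psi). now apply ClosedOf_fp. Qed.

Definition computes_fn (o : Baire) (n : nat) (e : prog) (F : list nat -> nat) : Prop :=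
  forall v, length v = n -> eval o e v (F v).

Lemma computes_fn_ext o n e F G :
  computes_fn o n e F -> (forall v, length v = n -> F v = G v) -> computes_fn o n e G.
Proof. intros H E v Hv. rewrite <- E by auto. auto. Qed.

Lemma computes_fn_zero o n : computes_fn o n PZero (fun _ => 0).
Proof. intros v _. constructor. Qed.

Lemma computes_fn_succ o n : computes_fn o (S n) PSucc (fun v => S (nth 0 v 0)).
Proof. intros [|x v] H; [discriminate | constructor]. Qed.

Lemma computes_fn_proj o n i : i < n -> computes_fn o n (PProj i) (fun v => nth i v 0).
Proof. intros Hi v Hv. constructor. lia. Qed.

Lemma computes_fn_oracle o n : computes_fn o (S n) POracle (fun v => o (nth 0 v 0)).
Proof. intros [|x v] H; [discriminate | constructor]. Qed.

Inductive computes_fns (o : Baire) (n : nat) : list prog -> list (list nat -> nat) -> Prop :=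
| computes_fns_nil : computes_fns o n [] []
| computes_fns_cons g G gs Gs :
    computes_fn o n g G -> computes_fns o n gs Gs -> computes_fns o n (g :: gs) (G :: Gs).

Lemma computes_fns_evals o n gs Gs :
  computes_fns o n gs Gs -> forall v, length v = n -> evals o gs v (map (fun G => G v) Gs).
Proof. induction 1; intros v Hv; simpl; constructor; auto. Qed.

Lemma computes_fns_length o n gs Gs : computes_fns o n gs Gs -> length Gs = length gs.
Proof. induction 1; simpl; auto. Qed.

Lemma computes_fn_comp o n m f F gs Gs :
  length gs = m -> computes_fn o m f F -> computes_fns o n gs Gs ->
  computes_fn o n (PComp f gs) (fun v => F (map (fun G => G v) Gs)).
Proof.
  intros Hl Hf Hg v Hv. eapply ev_comp.
  - exact (computes_fns_evals o n gs Gs Hg v Hv).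
  - apply Hf. rewrite length_map. erewrite computes_fns_length; eauto.
Qed.

Fixpoint prec (F G : list nat -> nat) (x : nat) (t : list nat) : nat :=
  match x with 0 => F t | S k => G (k :: prec F G k t :: t) end.

Lemma computes_fn_prim o n f F g G :
  computes_fn o n f F -> computes_fn o (S (S n)) g G ->
  computes_fn o (S n) (PPrim f g) (fun v => prec F G (nth 0 v 0) (tl v)).
Proof.
  intros Hf Hg [|x t] Hv; [discriminate|]. simpl in Hv. injection Hv as Hv. simpl.
  induction x as [|x IH].
  - constructor. auto.
  - eapply ev_primS; [exact IH|]. apply Hg. simpl. lia.
Qed.

Create HintDb programs discriminated.

(* Decomposes a program syntactically, except for the programs in [programs],
   whose specifications are used as they stand. *)
Ltac compute_fn := first
  [ solve [eauto with programs nocore]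
  | apply computes_fn_zero | apply computes_fn_succ | apply computes_fn_oracle
  | apply computes_fn_proj; lia
  | eapply computes_fn_comp; [reflexivity | compute_fn | compute_fns]
  | apply computes_fn_prim; [compute_fn | compute_fn] ]
with compute_fns := first
  [ apply computes_fns_nil | eapply computes_fns_cons; [compute_fn | compute_fns] ].

Ltac program_spec := eapply computes_fn_ext; [compute_fn|].

Definition padd := PPrim (PProj 0) (PComp PSucc [PProj 1]).
Lemma computes_padd o : computes_fn o 2 padd (fun v => nth 0 v 0 + nth 1 v 0).
Proof.
  program_spec. intros [|x [|y [|]]] Hv; try discriminate. simpl.
  induction x; simpl; auto.
Qed.
#[local] Hint Resolve computes_padd : programs.

Definition ppred := PPrim PZero (PProj 0).
Lemma computes_ppred o : computes_fn o 1 ppred (fun v => pred (nth 0 v 0)).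
Proof. program_spec. now intros [|[|x] [|]] Hv. Qed.
#[local] Hint Resolve computes_ppred : programs.

Definition psub := PComp (PPrim (PProj 0) (PComp ppred [PProj 1])) [PProj 1; PProj 0].
Lemma computes_psub o : computes_fn o 2 psub (fun v => nth 0 v 0 - nth 1 v 0).
Proof.
  program_spec. intros [|x [|y [|]]] Hv; try discriminate. simpl.
  clear Hv; induction y; simpl; lia.
Qed.
#[local] Hint Resolve computes_psub : programs.

Definition pisz := PPrim (PComp PSucc [PZero]) PZero.
Lemma computes_pisz o : computes_fn o 1 pisz (fun v => if nth 0 v 0 =? 0 then 1 else 0).
Proof. program_spec. now intros [|[|x] [|]] Hv. Qed.
#[local] Hint Resolve computes_pisz : programs.

Definition psg := PPrim PZero (PComp PSucc [PZero]).
Lemma computes_psg o : computes_fn o 1 psg (fun v => if nth 0 v 0 =? 0 then 0 else 1).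
Proof. program_spec. now intros [|[|x] [|]] Hv. Qed.
#[local] Hint Resolve computes_psg : programs.

Definition peq := PComp pisz [PComp padd [psub; PComp psub [PProj 1; PProj 0]]].
Lemma computes_peq o : computes_fn o 2 peq (fun v => if nth 0 v 0 =? nth 1 v 0 then 1 else 0).
Proof.
  program_spec. intros v _. simpl.
  destruct (Nat.eqb_spec (nth 0 v 0) (nth 1 v 0)) as [E | E].
  - rewrite E, Nat.sub_diag. reflexivity.
  - destruct (Nat.eqb_spec (nth 0 v 0 - nth 1 v 0 + (nth 1 v 0 - nth 0 v 0)) 0); auto; lia.
Qed.
#[local] Hint Resolve computes_peq : programs.

Fixpoint tri (n : nat) : nat := match n with 0 => 0 | S k => S k + tri k end.

Definition ptri := PPrim PZero (PComp padd [PProj 1; PComp PSucc [PProj 0]]).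
Lemma computes_ptri o : computes_fn o 1 ptri (fun v => tri (nth 0 v 0)).
Proof.
  program_spec. intros [|x [|]] Hv; try discriminate. simpl.
  clear Hv; induction x; simpl; lia.
Qed.
#[local] Hint Resolve computes_ptri : programs.

Definition ppair := PComp padd [PProj 1; PComp ptri [PComp padd [PProj 1; PProj 0]]].
Lemma computes_ppair o : computes_fn o 2 ppair (fun v => to_nat (nth 0 v 0, nth 1 v 0)).
Proof. program_spec. reflexivity. Qed.
#[local] Hint Resolve computes_ppair : programs.

Definition pleft := PComp POracle [PComp padd [PProj 0; PProj 0]].
Lemma computes_pleft o : computes_fn o 1 pleft (fun v => o (nth 0 v 0 + nth 0 v 0)).
Proof. program_spec. reflexivity. Qed.
#[local] Hint Resolve computes_pleft : programs.

Definition pright := PComp POracle [PComp PSucc [PComp padd [PProj 0; PProj 0]]].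
Lemma computes_pright o : computes_fn o 1 pright (fun v => o (S (nth 0 v 0 + nth 0 v 0))).
Proof. program_spec. reflexivity. Qed.
#[local] Hint Resolve computes_pright : programs.

Lemma bpair_even p q j : bpair p q (j + j) = p j.
Proof.
  unfold bpair. replace (j + j) with (2 * j) by lia.
  now rewrite Nat.even_mul, Nat.div2_double.
Qed.

Lemma bpair_odd p q j : bpair p q (S (j + j)) = q j.
Proof.
  unfold bpair. replace (S (j + j)) with (S (2 * j)) by lia.
  now rewrite Nat.even_succ, Nat.odd_mul, Nat.div2_succ_double.
Qed.

(* [code_tail q len i] is the code of the last [i] letters of [pref q len]. *)
Fixpoint code_tail (q : Baire) (len i : nat) : nat :=
  match i with 0 => 0 | S k => S (to_nat (q (len - S k), code_tail q len k)) end.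

Lemma code_tail_ext q q' len i :
  (forall j, q j = q' j) -> code_tail q len i = code_tail q' len i.
Proof. intros E. induction i; simpl; [reflexivity|]. now rewrite E, IHi. Qed.

Lemma code_tail_pref q len : code_tail q len len = code (pref q len).
Proof.
  enough (H : forall i, i <= len -> code_tail q len i = code (map q (seq (len - i) i))).
  { rewrite H, Nat.sub_diag; reflexivity. }
  induction i as [|i IH]; intros Hi; [reflexivity|].
  cbn [code_tail]. rewrite IH by lia. replace (len - i) with (S (len - S i)) by lia.
  reflexivity.
Qed.

Definition pcode_tail :=
  PPrim PZero
    (PComp PSucc [PComp ppair [PComp pright [PComp psub [PProj 2; PComp PSucc [PProj 0]]];
                               PProj 1]]).
Lemma computes_pcode_tail o :
  computes_fn o 2 pcode_tail
    (fun v => code_tail (fun j => o (S (j + j))) (nth 1 v 0) (nth 0 v 0)).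
Proof.
  program_spec. intros [|i [|len [|]]] Hv; try discriminate. simpl.
  clear Hv; induction i; simpl; auto.
Qed.
#[local] Hint Resolve computes_pcode_tail : programs.

Definition pcylinder_test :=
  PComp peq [PComp pleft [PProj 0]; PComp PSucc [PComp pcode_tail [PProj 1; PProj 1]]].
Lemma computes_pcylinder_test p q :
  computes_fn (bpair p q) 2 pcylinder_test
    (fun v => if p (nth 0 v 0) =? S (code (pref q (nth 1 v 0))) then 1 else 0).
Proof.
  program_spec. intros v _. simpl.
  rewrite bpair_even, <- code_tail_pref, (code_tail_ext _ q) by apply bpair_odd.
  reflexivity.
Qed.
#[local] Hint Resolve computes_pcylinder_test : programs.

Fixpoint sum_below (f : nat -> nat) (m : nat) : nat :=
  match m with 0 => 0 | S k => sum_below f k + f k end.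

Lemma sum_below_neq0 f m : sum_below f m <> 0 <-> exists k, k < m /\ f k <> 0.
Proof.
  induction m as [|m IH]; simpl.
  - split; [lia | intros [k [Hk _]]; lia].
  - split.
    + intros H. destruct (Nat.eq_dec (f m) 0) as [E | E].
      * destruct (proj1 IH) as [k [Hk Hf]]; [lia|]. exists k. split; [lia | exact Hf].
      * exists m. split; [lia | exact E].
    + intros [k [Hk Hf]]. destruct (Nat.eq_dec k m) as [-> | Hne]; [lia|].
      enough (sum_below f m <> 0) by lia. apply IH. exists k. split; [lia | exact Hf].
Qed.

Definition pcount_lengths :=
  PPrim PZero (PComp padd [PProj 1; PComp pcylinder_test [PProj 2; PProj 0]]).
Lemma computes_pcount_lengths p q :
  computes_fn (bpair p q) 2 pcount_lengths
    (fun v => sum_below (fun len => if p (nth 1 v 0) =? S (code (pref q len)) then 1 else 0)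
                        (nth 0 v 0)).
Proof.
  program_spec. intros [|m [|i [|]]] Hv; try discriminate. simpl.
  clear Hv; induction m; simpl; auto.
Qed.
#[local] Hint Resolve computes_pcount_lengths : programs.

Definition pcount_pairs :=
  PPrim PZero (PComp padd [PProj 1; PComp pcount_lengths [PProj 2; PProj 0]]).
Lemma computes_pcount_pairs p q :
  computes_fn (bpair p q) 2 pcount_pairs
    (fun v => sum_below (fun i => sum_below (fun len =>
                 if p i =? S (code (pref q len)) then 1 else 0) (nth 1 v 0)) (nth 0 v 0)).
Proof.
  program_spec. intros [|m [|N [|]]] Hv; try discriminate. simpl.
  clear Hv; induction m; simpl; auto.
Qed.
#[local] Hint Resolve computes_pcount_pairs : programs.

Definition hits (p q : Baire) (n : nat) : nat :=
  sum_below (fun i => sum_below (fun len => if p i =? S (code (pref q len)) then 1 else 0)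
                                (S n)) (S n).

Definition phits := PComp pcount_pairs [PComp PSucc [PProj 0]; PComp PSucc [PProj 0]].

Lemma computes_of_unary o e F : computes_fn o 1 e (fun v => F (nth 0 v 0)) -> computes e o F.
Proof. intros H n. exact (H [n] eq_refl). Qed.

Lemma computes_phits p q : computes phits (bpair p q) (hits p q).
Proof. apply computes_of_unary. program_spec. reflexivity. Qed.

Lemma hits_neq0 p q : (exists n, hits p q n <> 0) <-> ~ ClosedOf p q.
Proof.
  unfold hits, ClosedOf. split.
  - intros [n Hn] Hq. apply sum_below_neq0 in Hn as [i [_ Hi]].
    apply sum_below_neq0 in Hi as [len [_ Hlen]].
    apply (Hq i). destruct (Nat.eqb_spec (p i) (S (code (pref q len)))) as [E | E]; [|easy].
    rewrite E. apply basic_S_iff. eauto.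
  - intros Hq. apply NNPP. intros Hn. apply Hq. intros i Hi.
    destruct (p i) as [|m] eqn:E; [exact Hi|].
    apply basic_S_iff in Hi as [len ->].
    apply Hn. exists (i + len). rewrite sum_below_neq0. exists i. split; [lia|].
    rewrite sum_below_neq0. exists len. split; [lia|]. now rewrite E, Nat.eqb_refl.
Qed.

(* The closed set named by [sierp_closed o] is [{z | z 0 = 0}] if [o = 000...], and
   otherwise the nonempty set of [z] with [z 0 = S n] for some [n] with [o n <> 0]. *)
Definition sierp_closed (o : Baire) (n : nat) : nat :=
  S (code [if o n =? 0 then S n else 0]).

Lemma basic_sierp_closed o n z :
  basic (sierp_closed o n) z <-> z 0 = (if o n =? 0 then S n else 0).
Proof. unfold sierp_closed, basic. rewrite decode_code. simpl. tauto. Qed.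

Definition psierp_closed :=
  PComp PSucc [PComp PSucc [PComp ppair
    [PComp (PPrim (PComp PSucc [PProj 0]) PZero) [PComp POracle [PProj 0]; PProj 0]; PZero]]].
Lemma computes_psierp_closed o : computes psierp_closed o (sierp_closed o).
Proof.
  apply computes_of_unary. program_spec. intros v _. unfold sierp_closed. simpl.
  now destruct (o (nth 0 v 0)).
Qed.

Definition psg_right_head := PComp psg [PComp POracle [PComp PSucc [PZero]]].
Lemma computes_psg_right_head p q :
  computes psg_right_head (bpair p q) (fun _ => if q 0 =? 0 then 0 else 1).
Proof.
  apply computes_of_unary. program_spec. intros v _. simpl.
  now rewrite <- (bpair_odd p q 0).
Qed.

Lemma computes_oracle p : computes POracle p p.
Proof. intros n. constructor. Qed.

Lemma computes_pright_id p q : computes pright (bpair p q) q.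
Proof. apply computes_of_unary. program_spec. intros v _. apply bpair_odd. Qed.

(** * The reductions *)

Lemma pdom_ptot {X Y : RepSpace} (f : problem X Y) (x : X) (y0 : Y) : pdom (ptot f) x.
Proof.
  destruct (classic (pdom f x)) as [[y Hy] | Hn]; [exists y; now left | exists y0; now right].
Qed.

Lemma WFT_S_total A : pdom WFT_S A.
Proof.
  destruct (classic (forall z, ~ A z)) as [H | H];
    [exists true | exists false]; split; intros; easy.
Qed.

Lemma WFT_total A : pdom WFT A.
Proof. exact (WFT_S_total A). Qed.

Theorem WFT_S_le_TC : Wred WFT_S (ptot C_Baire).
Proof.
  exists phits, POracle. intros G HG p A HA _. simpl in HA. subst A.
  destruct (HG p (ClosedOf p) eq_refl (pdom_ptot C_Baire _ (fun _ => 0)))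
    as [q [Gq [y [Hy Hq]]]].
  simpl in Hy. subst y.
  exists p, q, (hits p q). split; [apply computes_oracle|]. split; [exact Gq|].
  split; [apply computes_phits|].
  destruct (classic (forall z, ~ ClosedOf p z)) as [Hempty | Hne].
  - exists true. split; [|easy]. simpl. apply hits_neq0, Hempty.
  - exists false. split; [|split; easy]. simpl. intros n.
    assert (Hpq : ClosedOf p q) by (destruct Hq as [Hq | Hq]; [exact Hq | firstorder]).
    destruct (Nat.eq_dec (hits p q n) 0) as [E | E]; [exact E|].
    exfalso. apply (proj1 (hits_neq0 p q)); eauto.
Qed.

Definition sierp_to_two : problem SierpS TwoS := fun b c => c = b.

Lemma sierp_to_two_le_C : Wred sierp_to_two C_Baire.
Proof.
  exists psg_right_head, psierp_closed. intros G HG p b Hb _.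
  assert (Hne : pdom C_Baire (ClosedOf (sierp_closed p))).
  { destruct b; simpl in Hb.
    - destruct Hb as [m Hm]. exists (fun i => if i =? 0 then S m else 0).
      intros n Hn. apply basic_sierp_closed in Hn. simpl in Hn.
      destruct (Nat.eqb_spec (p n) 0); [|discriminate]. injection Hn as ->. contradiction.
    - exists (fun _ => 0). intros n Hn. apply basic_sierp_closed in Hn.
      rewrite Hb in Hn. discriminate. }
  destruct (HG _ _ eq_refl Hne) as [q [Gq [y [Hy Hq]]]]. simpl in Hy. subst y.
  eexists _, q, _. split; [apply computes_psierp_closed|]. split; [exact Gq|].
  split; [apply computes_psg_right_head|].
  exists b. split; [|reflexivity]. simpl.
  destruct b; simpl in Hb.
  - destruct Hb as [m Hm]. specialize (Hq m). rewrite basic_sierp_closed in Hq.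
    destruct (Nat.eqb_spec (p m) 0); [contradiction|].
    destruct (Nat.eqb_spec (q 0) 0); [contradiction | reflexivity].
  - destruct (q 0) as [|m] eqn:E; [reflexivity|]. exfalso.
    apply (Hq m). rewrite basic_sierp_closed, Hb. exact E.
Qed.

Lemma WFT_le_comp : Wred WFT (pcomp sierp_to_two WFT_S).
Proof.
  exists pright, POracle. intros G HG p A HA _.
  assert (Hd : pdom (pcomp sierp_to_two WFT_S) A).
  { destruct (WFT_S_total A) as [b Hb]. exists b.
    split; [now exists b|]. split; [intros y _; now exists y | now exists b]. }
  destruct (HG p A HA Hd) as [q [Gq [c [Hc [_ [_ [b [Hb ->]]]]]]]].
  exists p, q, q. split; [apply computes_oracle|]. split; [exact Gq|].
  split; [apply computes_pright_id | now exists b].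
Qed.

Theorem WFT_le_C_comp_TC : Wred_cprod WFT C_Baire (ptot C_Baire).
Proof.
  exists ClosedS, SierpS, TwoS, sierp_to_two, WFT_S.
  split; [exact sierp_to_two_le_C|]. split; [exact WFT_S_le_TC | exact WFT_le_comp].
Qed.

Lemma not_Wred_of_adversary {X Y U V : RepSpace} (f : problem X Y) (g : problem U V) :
  (forall eH eK : prog, exists G p x,
     realizes G g /\ rs_delta X p x /\ pdom f x /\
     forall k q r y, computes eK p k -> G k = Some q -> computes eH (bpair p q) r ->
       rs_delta Y r y -> ~ f x y) ->
  ~ Wred f g.
Proof.
  intros Hadv [eH [eK HW]].
  destruct (Hadv eH eK) as [G [p [x [HG [Hp [Hx Hbad]]]]]].
  destruct (HW G HG p x Hp Hx) as [k [q [r [Hk [Gk [Hr [y [Hy Hf]]]]]]]].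
  exact (Hbad k q r y Hk Gk Hr Hy Hf).
Qed.

Definition choose (P : Baire -> Prop) : Baire := epsilon (inhabits (fun _ : nat => 0)) P.

Lemma choose_spec P : (exists x, P x) -> P (choose P).
Proof. apply epsilon_spec. Qed.

Definition stable (e : prog) (o : Baire) (b n v : nat) : Prop :=
  forall o', agree o o' b -> eval o' e [n] v.

Lemma stable_eval e o b n v : stable e o b n v -> eval o e [n] v.
Proof. intros H. apply H, agree_refl. Qed.

Lemma stable_of_eval e o n v : eval o e [n] v -> exists b, stable e o b n v.
Proof. apply eval_continuous. Qed.

Lemma stable_agree e o o2 b n v : agree o o2 b -> stable e o b n v -> stable e o2 b n v.
Proof. intros Ha H o' Ha'. apply H. eapply agree_trans; eauto. Qed.

Lemma stable_le e o b b' n v : b <= b' -> stable e o b n v -> stable e o b' n v.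
Proof. intros Hb H o' Ha. apply H. weaken Ha. Qed.

Lemma agree_bpair p p' q q' b :
  agree p p' b -> agree q q' b -> agree (bpair p q) (bpair p' q') b.
Proof.
  intros H1 H2 i Hi. unfold bpair. assert (Nat.div2 i <= i) by (apply Nat.div2_decr; lia).
  destruct (Nat.even i); [apply H1 | apply H2]; lia.
Qed.

Definition stable_pair (e : prog) (o q : Baire) (b n v : nat) : Prop :=
  forall o' q', agree o o' b -> agree q q' b -> eval (bpair o' q') e [n] v.

Lemma stable_pair_eval e o q b n v : stable_pair e o q b n v -> eval (bpair o q) e [n] v.
Proof. intros H. apply H; apply agree_refl. Qed.

Lemma stable_pair_of_eval e o q n v :
  eval (bpair o q) e [n] v -> exists b, stable_pair e o q b n v.
Proof.
  intros H. destruct (eval_continuous _ _ _ _ H) as [b Hb].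
  exists b. intros o' q' H1 H2. apply Hb, agree_bpair; auto.
Qed.

Lemma stable_pair_agree_l e o o2 q b n v :
  agree o o2 b -> stable_pair e o q b n v -> stable_pair e o2 q b n v.
Proof. intros Ha H o' q' H1 H2. apply H; auto. eapply agree_trans; eauto. Qed.

Lemma stable_pair_agree_r e o q q2 b n v :
  agree q q2 b -> stable_pair e o q b n v -> stable_pair e o q2 b n v.
Proof. intros Ha H o' q' H1 H2. apply H; auto. eapply agree_trans; eauto. Qed.

(** * [WFT] is not below [T C] *)

Section WFT_not_le_TC.
Variables eH eK : prog.

(* A first output digit [0] claims that the closed set is nonempty. *)
Definition says_nonempty (o x : Baire) : Prop := eval (bpair o x) eH [0] 0.

Definition certifies_nonempty (o : Baire) (b : nat) (w : list nat) : Prop :=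
  forall o' x, agree o o' b -> prefix_of w x 0 -> says_nonempty o' x.

Lemma certifies_nonempty_agree o o2 b w :
  agree o o2 b -> certifies_nonempty o b w -> certifies_nonempty o2 b w.
Proof. intros Ha H o' x Ha' Hw. apply H; auto. eapply agree_trans; eauto. Qed.

Lemma certifies_nonempty_le o b b' w :
  b <= b' -> certifies_nonempty o b w -> certifies_nonempty o b' w.
Proof. intros Hb H o' x Ha Hw. apply H; auto. weaken Ha. Qed.

Lemma certifies_nonempty_of o x :
  says_nonempty o x -> exists b, certifies_nonempty o b (pref x b).
Proof.
  intros H. destruct (stable_pair_of_eval _ _ _ _ _ H) as [b Hb].
  exists b. intros o' y Ha Hy. apply Hb; auto. now apply agree_of_prefix_pref.
Qed.

Lemma says_nonempty_of_certified o b w x :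
  certifies_nonempty o b w -> prefix_of w x 0 -> says_nonempty o x.
Proof. intros H Hw. apply H; [apply agree_refl | exact Hw]. Qed.

(* Once some answer is certified to be declared nonempty, remove the cylinders
   removed by the closed set [K(o)] handed to [T C] and those on which every answer
   is certified to be declared nonempty; thus [A] becomes [K(p)] minus the answers
   declared nonempty. *)
Definition Psi_TC (o : Baire) (b : nat) (w : list nat) : Prop :=
  (exists w0, certifies_nonempty o b w0) /\
  ((exists j t, stable eK o b j (S t) /\ w = decode t) \/ certifies_nonempty o b w).

Lemma Psi_TC_local o o2 b w : agree o o2 b -> Psi_TC o b w -> Psi_TC o2 b w.
Proof.
  intros Ha [[w0 H0] [[j [t [Hj ->]]] | Hw]].
  - split; [exists w0; eapply certifies_nonempty_agree; eauto|].
    left. exists j, t. split; [eapply stable_agree; eauto | reflexivity].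
  - split; [exists w0; eapply certifies_nonempty_agree; eauto|].
    right. eapply certifies_nonempty_agree; eauto.
Qed.

Section Diagonal.
Variable p : Baire.
Hypothesis ClosedOf_p :
  forall z, ClosedOf p z <-> ~ exists b w, Psi_TC p b w /\ prefix_of w z 0.

Lemma ClosedOf_p_full : ~ (exists x, says_nonempty p x) -> forall z, ClosedOf p z.
Proof.
  intros Hn z. apply ClosedOf_p. intros [b [w [[[w0 H0] _] _]]]. apply Hn.
  exists (ext w0). eapply says_nonempty_of_certified; [exact H0|].
  apply prefix_of_iff. reflexivity.
Qed.

Lemma ClosedOf_p_iff x0 k : says_nonempty p x0 -> computes eK p k ->
  forall z, ClosedOf p z <-> ClosedOf k z /\ ~ says_nonempty p z.
Proof.
  intros Hx0 Hk z. destruct (certifies_nonempty_of p x0 Hx0) as [b0 Hb0].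
  assert (Hcert : forall b, exists w0, certifies_nonempty p (b0 + b) w0).
  { intros b. exists (pref x0 b0). eapply certifies_nonempty_le; [|exact Hb0]. lia. }
  rewrite ClosedOf_p. split.
  - intros Hn. split.
    + intros n Hz. destruct (k n) as [|t] eqn:Ek; [exact Hz|].
      destruct (stable_of_eval eK p n (S t)) as [b1 Hb1]; [rewrite <- Ek; apply Hk|].
      apply Hn. exists (b0 + b1), (decode t). split; [|exact Hz].
      split; [apply Hcert|]. left. exists n, t. split; [|reflexivity].
      eapply stable_le; [|exact Hb1]. lia.
    + intros Hz. destruct (certifies_nonempty_of p z Hz) as [b2 Hb2].
      apply Hn. exists (b0 + b2), (pref z b2). split; [|apply prefix_of_pref].
      split; [apply Hcert|]. right. eapply certifies_nonempty_le; [|exact Hb2]. lia.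
  - intros [Hkz Hz] [b [w [[_ [[j [t [Hj ->]]] | Hw]] Hpw]]].
    + apply (Hkz j).
      rewrite (proj1 (computes_eval_iff _ _ _ _ _ Hk) (stable_eval _ _ _ _ _ Hj)).
      exact Hpw.
    + apply Hz. eapply says_nonempty_of_certified; eauto.
Qed.

(* In the last case [K(p)] is empty, so [T C] may answer anything. *)
Definition adversary_TC (k : Baire) : Baire :=
  if excluded_middle_informative (exists x, ClosedOf k x /\ ~ says_nonempty p x)
  then choose (fun x => ClosedOf k x /\ ~ says_nonempty p x)
  else if excluded_middle_informative (exists x, ClosedOf k x) then choose (ClosedOf k)
  else choose (says_nonempty p).

Lemma adversary_TC_realizes : realizes (fun k => Some (adversary_TC k)) (ptot C_Baire).
Proof.
  intros k A HA _. simpl in HA. subst A.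
  exists (adversary_TC k). split; [reflexivity|]. exists (adversary_TC k). split; [reflexivity|].
  unfold ptot, C_Baire, adversary_TC.
  destruct excluded_middle_informative as [Hx | _]; [left; exact (proj1 (choose_spec _ Hx))|].
  destruct excluded_middle_informative as [Hx | Hn]; [left; now apply choose_spec|].
  right. intros [x Hx]. apply Hn. now exists x.
Qed.

Lemma adversary_TC_cases k : (exists x, says_nonempty p x) ->
  (ClosedOf k (adversary_TC k) /\ ~ says_nonempty p (adversary_TC k)) \/
  (says_nonempty p (adversary_TC k) /\ ~ exists z, ClosedOf k z /\ ~ says_nonempty p z).
Proof.
  intros Hsays. unfold adversary_TC.
  destruct excluded_middle_informative as [Hx | Hnx]; [left; now apply choose_spec|].
  right. split; [|exact Hnx].
  destruct excluded_middle_informative as [Hx | _]; [|now apply choose_spec].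
  apply NNPP. intros Hs. apply Hnx. exists (choose (ClosedOf k)).
  split; [now apply choose_spec | exact Hs].
Qed.

Lemma adversary_TC_defeats k r y :
  computes eK p k -> computes eH (bpair p (adversary_TC k)) r -> rs_delta TwoS r y ->
  ~ WFT (ClosedOf p) y.
Proof.
  intros Hk Hr Hy HW. set (q := adversary_TC k) in *.
  assert (Hkey : says_nonempty p q <-> exists z, ClosedOf p z).
  { unfold says_nonempty. rewrite (computes_eval_iff _ _ _ _ _ Hr). simpl in Hy.
    destruct y; rewrite Hy; split; try discriminate.
    - intros [z Hz]. destruct (proj1 HW eq_refl z Hz).
    - intros _. apply NNPP. intros Hn. enough (false = true) by discriminate.
      apply HW. intros z Hz. apply Hn. eauto.
    - reflexivity. }
  destruct (classic (exists x, says_nonempty p x)) as [[x0 Hx0] | Hnone].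
  - setoid_rewrite (ClosedOf_p_iff x0 k Hx0 Hk) in Hkey.
    destruct (adversary_TC_cases k (ex_intro _ x0 Hx0)) as [[Hc Hs] | [Hs Hn]].
    + apply Hs, Hkey. exists q. now split.
    + apply Hn, Hkey, Hs.
  - apply Hnone. exists q. apply Hkey. exists q. now apply ClosedOf_p_full.
Qed.
End Diagonal.
End WFT_not_le_TC.

Theorem WFT_not_le_TC : ~ Wred WFT (ptot C_Baire).
Proof.
  apply not_Wred_of_adversary. intros eH eK.
  destruct (closed_fixpoint (Psi_TC eH eK) (Psi_TC_local eH eK)) as [p Hp].
  exists (fun k => Some (adversary_TC eH p k)), p, (ClosedOf p).
  split; [apply adversary_TC_realizes|]. split; [reflexivity|]. split; [apply WFT_total|].
  intros k q r y Hk Gk Hr. injection Gk as <-.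
  exact (adversary_TC_defeats eH eK p Hp k r y Hk Hr).
Qed.

(** * [WFT_S] is not below the completion of [C] *)

(* [shift N x] is a name of [x] in the completion; [zero] is a name of [bot]. *)
Definition shift (N : nat) (x : Baire) : Baire := fun i => if i <? N then 0 else S (x (i - N)).
Definition zero : Baire := fun _ => 0.

(* The closed set named by [k - 1] when [k - 1] is infinite. *)
Definition ClosedOf_minus1 (k : Baire) : Baire -> Prop :=
  fun x => forall j, k j <> 0 -> ~ basic (k j - 1) x.

Lemma minus1_shift N x : minus1 (shift N x) x.
Proof.
  exists (fun k => N + k). split; [intros; lia|]. split.
  - intros n. unfold shift. destruct (Nat.ltb_spec n N).
    + split; [easy | intros [k Hk]; lia].
    + split; [intros _; exists (n - N); lia | discriminate].
  - intros k. unfold shift. destruct (Nat.ltb_spec (N + k) N); [lia|].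
    replace (N + k - N) with k by lia. simpl. lia.
Qed.

Lemma minus1_zero q : ~ minus1 zero q.
Proof. intros [s [_ [H _]]]. apply (proj2 (H (s 0))); eauto. Qed.

Lemma ClosedOf_minus1_iff k k' x : minus1 k k' -> (ClosedOf_minus1 k x <-> ClosedOf k' x).
Proof.
  intros [s [_ [Hs Hk]]]. split.
  - intros H i. rewrite Hk. apply H, Hs. eauto.
  - intros H j Hj. apply Hs in Hj as [i <-]. rewrite <- Hk. apply H.
Qed.

Lemma agree_shift N x x' b : agree x x' b -> agree (shift N x) (shift N x') b.
Proof. intros H i Hi. unfold shift. destruct (i <? N); auto. f_equal. apply H. lia. Qed.

Lemma agree_zero_shift b x : agree zero (shift b x) b.
Proof. intros i Hi. unfold shift, zero. destruct (Nat.ltb_spec i b); lia. Qed.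

Lemma agree_ext_of_prefix w x : prefix_of w x 0 -> agree x (ext w) (length w).
Proof. rewrite prefix_of_iff. intros H i Hi. exact (H i Hi). Qed.

Lemma agree_ext_pref x b : agree x (ext (pref x b)) b.
Proof. rewrite <- (pref_length x b) at 2. apply agree_ext_of_prefix, prefix_of_pref. Qed.

Definition answers (k q : Baire) : Prop :=
  (exists N x, ClosedOf_minus1 k x /\ q = shift N x) \/
  (q = zero /\ forall x, ~ ClosedOf_minus1 k x).

Lemma answers_agree_zero k b : exists q, answers k q /\ agree zero q b.
Proof.
  destruct (classic (exists x, ClosedOf_minus1 k x)) as [[x Hx] | Hn].
  - exists (shift b x). split; [left; eauto | apply agree_zero_shift].
  - exists zero. split; [|apply agree_refl]. right. split; [reflexivity|].
    intros x Hx. apply Hn. eauto.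
Qed.

Lemma answers_exist k : exists q, answers k q.
Proof. destruct (answers_agree_zero k 0) as [q [Hq _]]. eauto. Qed.

Lemma realizes_barC (G : Baire -> option Baire) :
  (forall k, exists q, G k = Some q /\ answers k q) -> realizes G (pbar C_Baire).
Proof.
  intros HG k ox Hox _. destruct (HG k) as [q [Gk Hq]]. exists q. split; [exact Gk|].
  destruct ox as [A |].
  - simpl in Hox. destruct Hox as [k' [Hk' ->]].
    destruct Hq as [[N [x [Hx ->]]] | [-> Hn]].
    + exists (Some x). split; [exists x; split; [apply minus1_shift | reflexivity]|].
      left. now apply (ClosedOf_minus1_iff k k' x Hk').
    + exists None. split.
      * intros [q0 [x0 [Hq0 _]]]. exact (minus1_zero q0 Hq0).
      * intros [z Hz]. apply (Hn z). now apply (ClosedOf_minus1_iff k k' z Hk').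
  - destruct (classic (exists x, minus1 q x)) as [[x Hx] | Hn].
    + exists (Some x). split; [now exists x | exact I].
    + exists None. split; [|exact I]. intros [q0 [x0 [Hq0 _]]]. apply Hn. eauto.
Qed.

Definition drop4 (z : Baire) : Baire := fun i => z (4 + i).

Definition cons4 (a b c d : nat) (x : Baire) : Baire :=
  fun i => match i with 0 => a | 1 => b | 2 => c | 3 => d | S (S (S (S i))) => x i end.

Section WFT_S_not_le_barC.
Variables eH eK : prog.

(* A nonzero output digit claims that the closed set is empty. *)
Definition says_empty (o q : Baire) : Prop := exists n v, v <> 0 /\ eval (bpair o q) eH [n] v.

Definition forces_empty (o q : Baire) (b n : nat) : Prop :=
  exists v, v <> 0 /\ stable_pair eH o q b n v.

Lemma forces_empty_agree_l o o2 q b B n :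
  b <= B -> agree o o2 B -> forces_empty o2 q b n -> forces_empty o q b n.
Proof.
  intros Hb Ha [v [Hv H]]. exists v. split; [exact Hv|].
  eapply stable_pair_agree_l; [|exact H]. apply agree_sym. weaken Ha.
Qed.

(* Points [0, n, b, ...] stay iff output [n] is forced nonzero by the first [b]
   digits of [p] and of a name of [bot]; points [1, N, n, b, x] stay iff [x] is in
   the closed set [K(p) - 1] and output [n] is forced nonzero by the first [b]
   digits of [p] and of the name [shift N x]; everything else is removed. *)
Definition Psi_barC (o : Baire) (B : nat) (w : list nat) : Prop :=
  (exists c, 2 <= c /\ w = [c])
  \/ (exists n b, b <= B /\ w = [0; n; b] /\ ~ forces_empty o zero b n)
  \/ (exists N n b u, b <= B /\ length u = b /\ w = [1; N; n; b] ++ u /\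
                      ~ forces_empty o (shift N (ext u)) b n)
  \/ (exists N n b j t, stable eK o B j (S (S t)) /\ w = [1; N; n; b] ++ decode t).

Lemma Psi_barC_local o o2 B w : agree o o2 B -> Psi_barC o B w -> Psi_barC o2 B w.
Proof.
  intros Ha [H | [H | [H | H]]].
  - now left.
  - right; left. destruct H as [n [b [Hb [Hw Hn]]]]. exists n, b.
    repeat split; auto. intros Hf. apply Hn. eapply forces_empty_agree_l; eauto.
  - right; right; left. destruct H as [N [n [b [u [Hb [Hu [Hw Hn]]]]]]]. exists N, n, b, u.
    repeat split; auto. intros Hf. apply Hn. eapply forces_empty_agree_l; eauto.
  - right; right; right. destruct H as [N [n [b [j [t [Hj Hw]]]]]]. exists N, n, b, j, t.
    split; [eapply stable_agree; eauto | exact Hw].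
Qed.

Lemma forces_empty_agree_r o q q2 b n :
  agree q q2 b -> forces_empty o q b n -> forces_empty o q2 b n.
Proof.
  intros Ha [v [Hv H]]. exists v. split; [exact Hv|]. eapply stable_pair_agree_r; eauto.
Qed.

Lemma says_empty_of_forces o q b n : forces_empty o q b n -> says_empty o q.
Proof. intros [v [Hv H]]. exists n, v. split; [exact Hv | now apply stable_pair_eval in H]. Qed.

Lemma prefix_of_drop4 w z : prefix_of w z 4 <-> prefix_of w (drop4 z) 0.
Proof. exact (prefix_of_shift w z 4 0). Qed.

Section Diagonal.
Variable p : Baire.
Hypothesis ClosedOf_p :
  forall z, ClosedOf p z <-> ~ exists B w, Psi_barC p B w /\ prefix_of w z 0.

Section Answer.
Variable k : Baire.
Hypothesis Hk : computes eK p k.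

Definition in_diagonal (z : Baire) : Prop :=
  (z 0 = 0 /\ forces_empty p zero (z 2) (z 1)) \/
  (z 0 = 1 /\ ClosedOf_minus1 k (drop4 z) /\
   forces_empty p (shift (z 1) (drop4 z)) (z 3) (z 2)).

Lemma ClosedOf_p_of_in_diagonal z : in_diagonal z -> ClosedOf p z.
Proof.
  intros Hz. apply ClosedOf_p. intros [B [w [HP Hw]]].
  destruct HP as [[c [Hc ->]] | [[n [b [_ [-> Hn]]]] |
                  [[N [n [b [u [_ [Hu [-> Hn]]]]]]] | [N [n [b [j [t [Hj ->]]]]]]]]];
    simpl in Hw.
  - destruct Hw as [H0 _]. destruct Hz as [[H _] | [H _]]; lia.
  - destruct Hw as [H0 [H1 [H2 _]]]. destruct Hz as [[_ Hf] | [H _]]; [|lia].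
    apply Hn. now rewrite <- H1, <- H2.
  - destruct Hw as [H0 [H1 [H2 [H3 Hw]]]]. destruct Hz as [[H _] | [_ [_ Hf]]]; [lia|].
    rewrite H1, H2, H3 in Hf. apply Hn. eapply forces_empty_agree_r; [|exact Hf].
    apply agree_shift. rewrite <- Hu. now apply agree_ext_of_prefix, prefix_of_drop4.
  - destruct Hw as [H0 [H1 [H2 [H3 Hw]]]]. destruct Hz as [[H _] | [_ [Hc _]]]; [lia|].
    assert (Ek : k j = S (S t)).
    { apply (computes_eval_iff _ _ _ _ _ Hk). exact (stable_eval _ _ _ _ _ Hj). }
    apply (Hc j); rewrite Ek; [discriminate|]. simpl.
    now apply prefix_of_drop4.
Qed.

Lemma in_diagonal_of_ClosedOf_p z : ClosedOf p z -> in_diagonal z.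
Proof.
  rewrite ClosedOf_p. intros Hz.
  destruct (z 0) as [|[|c]] eqn:E0.
  - left. split; [exact E0|]. apply NNPP. intros Hn. apply Hz.
    exists (z 2), [0; z 1; z 2]. split; [right; left; exists (z 1), (z 2); auto | simpl; auto].
  - right. split; [exact E0|]. split.
    + intros j Hj Hb. destruct (k j) as [|[|t]] eqn:Ek; [easy | easy|].
      destruct (stable_of_eval eK p j (S (S t))) as [b Hb']; [rewrite <- Ek; apply Hk|].
      apply Hz. exists b, ([1; z 1; z 2; z 3] ++ decode t). split.
      * right; right; right. exists (z 1), (z 2), (z 3), j, t. auto.
      * simpl. repeat split; auto. now apply prefix_of_drop4.
    + apply NNPP. intros Hn. apply Hz.
      exists (z 3), ([1; z 1; z 2; z 3] ++ pref (drop4 z) (z 3)). split.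
      * right; right; left. exists (z 1), (z 2), (z 3), (pref (drop4 z) (z 3)).
        split; [lia|]. split; [apply pref_length|]. split; [reflexivity|].
        intros Hf. apply Hn. eapply forces_empty_agree_r; [|exact Hf].
        apply agree_shift, agree_sym, agree_ext_pref.
      * simpl. repeat split; auto. apply prefix_of_drop4, prefix_of_pref.
  - exfalso. apply Hz. exists 0, [S (S c)]. split.
    + left. exists (S (S c)). split; [lia | reflexivity].
    + simpl. auto.
Qed.

Lemma point_of_says_empty q : answers k q -> says_empty p q -> exists z, ClosedOf p z.
Proof.
  intros Hq [n [v [Hv Hev]]].
  destruct (stable_pair_of_eval _ _ _ _ _ Hev) as [b Hb].
  destruct Hq as [[N [x [Hx ->]]] | [-> _]].
  - exists (cons4 1 N n b x). apply ClosedOf_p_of_in_diagonal.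
    right. split; [reflexivity|]. split; [exact Hx | now exists v].
  - exists (cons4 0 n b 0 zero). apply ClosedOf_p_of_in_diagonal.
    left. split; [reflexivity | now exists v].
Qed.

Lemma says_empty_of_point z : ClosedOf p z -> exists q, answers k q /\ says_empty p q.
Proof.
  intros Hz. apply in_diagonal_of_ClosedOf_p in Hz as [[_ Hf] | [_ [Hc Hf]]].
  - destruct (answers_agree_zero k (z 2)) as [q [Hq Hzq]].
    exists q. split; [exact Hq|]. apply (says_empty_of_forces _ _ (z 2) (z 1)).
    eapply forces_empty_agree_r; eauto.
  - exists (shift (z 1) (drop4 z)). split; [left; eauto|].
    exact (says_empty_of_forces _ _ _ _ Hf).
Qed.
End Answer.

Definition adversary_barC (k : Baire) : Baire :=
  if excluded_middle_informative (exists q, answers k q /\ says_empty p q)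
  then choose (fun q => answers k q /\ says_empty p q)
  else choose (answers k).

Lemma adversary_barC_answers k : answers k (adversary_barC k).
Proof.
  unfold adversary_barC. destruct excluded_middle_informative as [H | _].
  - exact (proj1 (choose_spec _ H)).
  - apply choose_spec, answers_exist.
Qed.

Lemma adversary_barC_says k :
  ~ says_empty p (adversary_barC k) -> ~ exists q, answers k q /\ says_empty p q.
Proof.
  unfold adversary_barC. destruct excluded_middle_informative as [H | H]; [|easy].
  intros Hn. exfalso. exact (Hn (proj2 (choose_spec _ H))).
Qed.

Lemma adversary_barC_defeats k r y :
  computes eK p k -> computes eH (bpair p (adversary_barC k)) r -> rs_delta SierpS r y ->
  ~ WFT_S (ClosedOf p) y.
Proof.
  intros Hk Hr Hy HW. set (q := adversary_barC k) in *.
  assert (Hkey : says_empty p q <-> y = true).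
  { simpl in Hy. unfold says_empty. setoid_rewrite (computes_eval_iff _ _ _ _ _ Hr).
    destruct y; split; intros H; try easy.
    - destruct Hy as [n Hn]. exists n, (r n). auto.
    - destruct H as [n [v [Hv <-]]]. exfalso. exact (Hv (Hy n)). }
  unfold WFT_S in HW. rewrite HW in Hkey. clear y Hy HW.
  destruct (classic (says_empty p q)) as [Hs | Hs].
  - destruct (point_of_says_empty k Hk q (adversary_barC_answers k) Hs) as [z Hz].
    exact (proj1 Hkey Hs z Hz).
  - apply (adversary_barC_says k Hs). apply NNPP. intros Hn. apply Hs, Hkey.
    intros z Hz. apply Hn. exact (says_empty_of_point k Hk z Hz).
Qed.
End Diagonal.
End WFT_S_not_le_barC.

Theorem WFT_S_not_le_barC : ~ Wred WFT_S (pbar C_Baire).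
Proof.
  apply not_Wred_of_adversary. intros eH eK.
  destruct (closed_fixpoint (Psi_barC eH eK) (Psi_barC_local eH eK)) as [p Hp].
  exists (fun k => Some (adversary_barC eH p k)), p, (ClosedOf p).
  split.
  { apply realizes_barC. intros k. eexists. split; [reflexivity | apply adversary_barC_answers]. }
  split; [reflexivity|]. split; [apply WFT_S_total|].
  intros k q r y Hk Gk Hr. injection Gk as <-.
  exact (adversary_barC_defeats eH eK p Hp k r y Hk Hr).
Qed.

Theorem proposition11p4 :
  (Wred WFT_S (ptot C_Baire) /\ ~ Wred WFT_S (pbar C_Baire)) /\
  (Wred_cprod WFT C_Baire (ptot C_Baire) /\ ~ Wred WFT (ptot C_Baire)).
Proof.
  split; split.
  - exact WFT_S_le_TC.
  - exact WFT_S_not_le_barC.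
  - exact WFT_le_C_comp_TC.
  - exact WFT_not_le_TC.
Qed.
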